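(* Let $X$ be an exponential vector space over a field $K$. Then: (i) for all $x\in X\smallsetminus X_0$, $x\in L(x)$ and $\uparrow L(x)=L(x)$; (ii) if $x,y\in X\smallsetminus X_0$ and $x\leq y$, then $L(x)\supseteq L(y)$; (iii) if $x=\alpha y+p$ for some $\alpha\in K\smallsetminus\{0\}$, $p\in X_0$ and $y\in X\smallsetminus X_0$, then $L(x)=L(y)$; (iv) $L(x)\cap X_0=\emptyset$ for all $x\in X\smallsetminus X_0$; (v) if $a\in L(b)$ (with $b\in X\smallsetminus X_0$) then $L(a)\subseteq L(b)$; (vi) for any $x,y\in X\smallsetminus X_0$, $L(x)\cap L(y)\neq\emptyset$.
   Context: An exponential vector space (evs) over a field $K$ is a partially ordered set $(X,\leq)$ with a binary operation $+$ on $X$ and a map $K\times X\to X$, $(\alpha,x)\mapsto \alpha x$, such that: (A1) $(X,+)$ is a commutative semigroup with identity $\theta$; (A2) $x\leq y$ implies $x+z\leq y+z$ and $\alpha x\leq \alpha y$ for all $z\in X$, $\alpha\in K$; (A3) $\alpha(x+y)=\alpha x+\alpha y$, $\alpha(\beta x)=(\alpha\beta)x$, $(\alpha+\beta)x\leq \alpha x+\beta x$, $1x=x$; (A4) $\alpha x=\theta$ iff $\alpha=0$ or $x=\theta$; (A5) $x+(-1)x=\theta$ iff $x\in X_0$, where $X_0:=\{z\in X: y\not\leq z \text{ for all } y\in X\smallsetminus\{z\}\}$ (the set of minimal elements, called the primitive space; it is a vector space over $K$); (A6) for each $x\in X$ there is $p\in X_0$ with $p\leq x$. For $x\in X\smallsetminus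 X_0$ let $L(x):=\{z\in X: z\geq \alpha x+p \text{ for some } \alpha\in K\smallsetminus\{0\},\ p\in X_0\}$. For a subset $S\subseteq X$, $\uparrow S:=\{z\in X: z\geq s \text{ for some } s\in S\}$. *)

From HB Require Import structures.
From mathcomp Require Import all_boot all_algebra.
Set Implicit Arguments. Unset Strict Implicit. Unset Printing Implicit Defensive.
Import GRing.Theory.
Local Open Scope ring_scope.

Section EVS.
Variables (K : fieldType) (X : Type).
Variables (le : X -> X -> Prop) (add : X -> X -> X) (theta : X)
          (smul : K -> X -> X).

(* X_0 : the primitive space = set of minimal elements of (X, le). *)
Definition primitive (z : X) : Prop := forall y : X, y <> z -> ~ le y z.

Definition Lset (x : X) (z : X) : Prop :=
  exists (a : K) (p : X), a != 0 /\ primitive p /\ le (add (smul a x) p) z.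

Definition upset (S : X -> Prop) (z : X) : Prop := exists s, S s /\ le s z.

Record is_evs : Prop := {
  evs_refl : forall x, le x x;
  evs_antisym : forall x y, le x y -> le y x -> x = y;
  evs_trans : forall x y z, le x y -> le y z -> le x z;
  evs_addA : forall x y z, add x (add y z) = add (add x y) z;
  evs_addC : forall x y, add x y = add y x;
  evs_add0 : forall x, add x theta = x;
  evs_le_add : forall x y z, le x y -> le (add x z) (add y z);
  evs_le_smul : forall (a : K) x y, le x y -> le (smul a x) (smul a y);
  evs_smulD : forall (a : K) x y, smul a (add x y) = add (smul a x) (smul a y);
  evs_smulA : forall (a b : K) x, smul a (smul b x) = smul (a * b) x;
  evs_smul_addle : forall (a b : K) x, le (smul (a + b) x) (add (smul a x) (smul b x));
  evs_smul1 : forall x, smul 1 x = x;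
  evs_smul_eq0 : forall (a : K) x, smul a x = theta <-> (a = 0 \/ x = theta);
  evs_neg : forall x, add x (smul (-1) x) = theta <-> primitive x;
  evs_prim_below : forall x, exists p, primitive p /\ le p x
}.
End EVS.

(* The affine maps y |-> a y + p with a <> 0 and p in X_0 are invertible, with
   inverse z |-> a^-1 z + (-a^-1) p: this uses p + (-1) p = theta (A5) and the
   closure of X_0 under sums and scalar multiples.  Composing affine maps gives
   L(a y + p) = L(y), and (v) follows as a >= c b + p gives
   L(a) ⊆ L(c b + p) = L(b).  For (iv), a minimal z above a x + p equals it, so
   x = a^-1 z + (-a^-1) p would be primitive.  For (vi), x + y dominates
   x + q and y + p for primitive q <= y and p <= x (A6). *)
From HB Require Import structures.
From mathcomp Require Import all_boot all_algebra.
From Stdlib Require Import Classical.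
Set Implicit Arguments. Unset Strict Implicit.
Import GRing.Theory.
Local Open Scope ring_scope.

Section ExponentialVectorSpace.
Variables (K : fieldType) (X : Type)
  (le : X -> X -> Prop) (add : X -> X -> X) (theta : X) (smul : K -> X -> X).
Hypothesis HX : is_evs le add theta smul.

Local Notation primitive := (primitive le).
Local Notation L := (Lset le add smul).

Lemma smul_theta (a : K) : smul a theta = theta.
Proof. by apply/(evs_smul_eq0 HX); right. Qed.

Lemma primitive_theta : primitive theta.
Proof. by apply/(evs_neg HX); rewrite smul_theta (evs_add0 HX). Qed.

Lemma primitive_smul (a : K) p : primitive p -> primitive (smul a p).
Proof.
move=> /(evs_neg HX) Hp; apply/(evs_neg HX).
rewrite (evs_smulA HX) mulrC -(evs_smulA HX) -(evs_smulD HX).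
by rewrite Hp smul_theta.
Qed.

Lemma primitive_add p q : primitive p -> primitive q -> primitive (add p q).
Proof.
move=> /(evs_neg HX) Hp /(evs_neg HX) Hq; apply/(evs_neg HX).
have -> : add (add p q) (smul (-1) (add p q)) =
          add (add p (smul (-1) p)) (add q (smul (-1) q)).
  rewrite (evs_smulD HX) -!(evs_addA HX); congr (add p _).
  by rewrite (evs_addC HX q) -(evs_addA HX) (evs_addC HX q).
by rewrite Hp Hq (evs_add0 HX).
Qed.

Lemma primitive_le_eq w z : primitive z -> le w z -> w = z.
Proof. by move=> Hz Hwz; apply: NNPP => /Hz. Qed.

Lemma le_addl x y z : le x y -> le (add z x) (add z y).
Proof. by move=> Hxy; rewrite !(evs_addC HX z); apply: (evs_le_add HX). Qed.

Lemma add_smulVK (a : K) p y : a != 0 -> primitive p ->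
  add (smul a^-1 (add (smul a y) p)) (smul (- a^-1) p) = y.
Proof.
move=> Ha /(evs_neg HX) Hp.
rewrite (evs_smulD HX) (evs_smulA HX) mulVf // (evs_smul1 HX) -(evs_addA HX).
rewrite -mulrN1 -(evs_smulA HX) -(evs_smulD HX) Hp smul_theta.
exact: (evs_add0 HX).
Qed.

Lemma Lset_refl x : L x x.
Proof.
exists 1, theta; split; first exact: oner_neq0.
split; first exact: primitive_theta.
by rewrite (evs_smul1 HX) (evs_add0 HX); apply: (evs_refl HX).
Qed.

Lemma upset_Lset x z : upset le (L x) z <-> L x z.
Proof.
split=> [[s [[a [p [Ha [Hp Hs]]]] Hsz]] | Hz].
  by exists a, p; do 2!split => //; apply: (evs_trans HX) Hsz.
by exists z; split => //; apply: (evs_refl HX).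
Qed.

Lemma Lset_le x y : le x y -> forall z, L y z -> L x z.
Proof.
move=> Hxy z [a [p [Ha [Hp Hle]]]]; exists a, p; do 2!split => //.
by apply: (evs_trans HX) Hle; apply/(evs_le_add HX)/(evs_le_smul HX).
Qed.

Lemma Lset_affine_sub (a : K) p y : a != 0 -> primitive p ->
  forall z, L (add (smul a y) p) z -> L y z.
Proof.
move=> Ha Hp z [b [q [Hb [Hq Hle]]]].
exists (b * a), (add (smul b p) q); split; first by rewrite mulf_neq0.
split; first by apply: primitive_add => //; apply: primitive_smul.
by rewrite (evs_addA HX) -(evs_smulA HX) -(evs_smulD HX).
Qed.

Lemma Lset_affine (a : K) p y : a != 0 -> primitive p ->
  forall z, L (add (smul a y) p) z <-> L y z.
Proof.
move=> Ha Hp z; split; first exact: Lset_affine_sub.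
rewrite -{1}(add_smulVK y Ha Hp); apply: Lset_affine_sub; first by rewrite invr_eq0.
exact: primitive_smul.
Qed.

Lemma Lset_not_primitive x : ~ primitive x -> forall z, L x z -> ~ primitive z.
Proof.
move=> Hx z [a [p [Ha [Hp Hle]]]] Hz; apply: Hx.
rewrite -(add_smulVK x Ha Hp) (primitive_le_eq Hz Hle).
by apply: primitive_add => //; apply: primitive_smul.
Qed.

Lemma Lset_trans a b : L b a -> forall z, L a z -> L b z.
Proof.
move=> [c [p [Hc [Hp Hle]]]] z Haz.
by apply/(Lset_affine b Hc Hp); apply: Lset_le Hle z Haz.
Qed.

Lemma Lset_addl x y : L x (add x y).
Proof.
have [p [Hp Hpy]] := evs_prim_below HX y.
exists 1, p; split; first exact: oner_neq0.
by split => //; rewrite (evs_smul1 HX); apply: le_addl.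
Qed.

Lemma Lset_addr x y : L y (add x y).
Proof. by rewrite (evs_addC HX); apply: Lset_addl. Qed.

End ExponentialVectorSpace.

Theorem mainTheorem15 (K : fieldType) (X : Type)
  (le : X -> X -> Prop) (add : X -> X -> X) (theta : X) (smul : K -> X -> X)
  (HX : is_evs le add theta smul) :
  (* (i) *)
  (forall x, ~ primitive le x ->
     Lset le add smul x x /\
     (forall z, upset le (Lset le add smul x) z <-> Lset le add smul x z)) /\
  (* (ii) *)
  (forall x y, ~ primitive le x -> ~ primitive le y -> le x y ->
     forall z, Lset le add smul y z -> Lset le add smul x z) /\
  (* (iii) *)
  (forall x y (a : K) p, a != 0 -> primitive le p -> ~ primitive le y ->
     x = add (smul a y) p ->
     forall z, Lset le add smul x z <-> Lset le add smul y z) /\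
  (* (iv) *)
  (forall x, ~ primitive le x ->
     forall z, Lset le add smul x z -> ~ primitive le z) /\
  (* (v) *)
  (forall a b, ~ primitive le b -> Lset le add smul b a ->
     forall z, Lset le add smul a z -> Lset le add smul b z) /\
  (* (vi) *)
  (forall x y, ~ primitive le x -> ~ primitive le y ->
     exists z, Lset le add smul x z /\ Lset le add smul y z).
Proof.
split; first by move=> x _; split; [exact: Lset_refl HX x | exact: upset_Lset HX x].
split; first by move=> x y _ _; exact: Lset_le HX x y.
split; first by move=> x y a p Ha Hp _ ->; exact: Lset_affine HX a p y Ha Hp.
split; first exact: Lset_not_primitive HX.
split; first by move=> a b _; exact: Lset_trans HX a b.
move=> x y _ _; exists (add x y).
by split; [exact: Lset_addl HX x y | exact: Lset_addr HX x y].
Qed.
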